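(* Let $\lambda>0$, $A>0$, $B>0$, and for integers $N\ge0$ and $z\in\mathbb{C}$ with $\Re(z)>B$ let $$R_{fact}(\lambda,A,B,N,z)=\frac{A}{(\lambda B)^{\lambda B}}\,\frac{(N+\lambda B+1)^{N+\lambda B+1}}{(N+1)^N}\left|\frac{\Gamma(\lambda z)\Gamma(N+1)}{\Gamma(\lambda z+N+1)(\Re(z)-B)}\right|.$$ Then for fixed $z$ with $\Re(z)>B$, as $N\to+\infty$, $$R_{fact}(\lambda,A,B,N,z)\sim\frac{A\,e^{\lambda B(1-\ln(\lambda B))}}{N^{\lambda(\Re(z)-B)-1}}\,\frac{|\Gamma(\lambda z)|}{\Re(z)-B}.$$ *)

From Stdlib Require Import Reals.
From Coquelicot Require Import Coquelicot.
Open Scope R_scope.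

(* Euler Gamma function, defined for Re z > 0 by the (improper) Euler integral
   Gamma z = int_0^oo t^(z-1) e^(-t) dt, with t^(z-1) = t^(Re z - 1) * e^(i Im z ln t),
   split into real and imaginary parts. *)
Definition Gamma (z : C) : C :=
  (RInt_gen (fun t => Rpower t (Re z - 1) * cos (Im z * ln t) * exp (- t))
            (at_right 0) (Rbar_locally p_infty),
   RInt_gen (fun t => Rpower t (Re z - 1) * sin (Im z * ln t) * exp (- t))
            (at_right 0) (Rbar_locally p_infty)).

Definition R_fact (lam A B : R) (N : nat) (z : C) : R :=
  A / Rpower (lam * B) (lam * B)
  * (Rpower (INR N + lam * B + 1) (INR N + lam * B + 1) / (INR N + 1) ^ N)
  * Cmod (Cdiv (Cmult (Gamma (Cmult (RtoC lam) z)) (Gamma (RtoC (INR N + 1))))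
               (Cmult (Gamma (Cplus (Cmult (RtoC lam) z) (RtoC (INR N + 1))))
                      (RtoC (Re z - B)))).

(* Write s = lam z and c = lam B.  Since Gamma (N + 1) = N!, the quotient in the theorem is
     [N! N^(Re s) / |Gamma (s + N + 1)|] * [(N + c + 1)^(N + c + 1) / ((N + 1)^N N^(c + 1)) / e^c].
   The second factor tends to 1 by elementary bounds on logarithms.  For the first, substitute
   t = N u in Gamma (s + N + 1) = int t^N e^(-t) t^s dt: the difference with N^s N! is
   N^s int t^N e^(-t) (u^s - 1) dt, where |u^s - 1| = O(|u - 1| (1 + u^m)) for an integer
   m >= Re s, and the weight t^N e^(-t) / N! concentrates at u = 1 because its scaled moments
   (N + j)! / (N! N^j) tend to 1.  Finally Gamma (lam z) <> 0: otherwise Gamma (s + 1) = s Gamma s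
   would make every Gamma (s + n) vanish, contradicting this asymptotic. *)

From Stdlib Require Import Reals ZArith Lra Lia.
From Coquelicot Require Import Coquelicot.
Open Scope R_scope.

Notation is_RInt_0_oo f l := (is_RInt_gen f (at_right 0) (Rbar_locally p_infty) l).
Notation RInt_0_oo f := (RInt_gen f (at_right 0) (Rbar_locally p_infty)).

Lemma at_right_0_pos : at_right 0 (fun t => 0 < t).
Proof. exists (mkposreal 1 Rlt_0_1). now intros t _ Ht. Qed.

Lemma p_infty_pos : Rbar_locally p_infty (fun t => 0 < t).
Proof. now exists 0. Qed.

Lemma filter_prod_0_oo :
  filter_prod (at_right 0) (Rbar_locally p_infty) (fun ab => 0 < fst ab <= snd ab).
Proof.
  apply (Filter_prod _ _ _ (fun a => 0 < a < 1) (fun b => 1 < b)).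
  - exists (mkposreal 1 Rlt_0_1). intros t Ht Ht0.
    change (Rabs (t - 0) < 1) in Ht. apply Rabs_def2 in Ht. lra.
  - now exists 1.
  - simpl. intros a b Ha Hb. lra.
Qed.

Lemma is_RInt_0_oo_ext (f g : R -> R) l :
  (forall t, 0 < t -> f t = g t) -> is_RInt_0_oo f l -> is_RInt_0_oo g l.
Proof.
  intros Hfg. apply is_RInt_gen_ext.
  generalize filter_prod_0_oo. apply filter_imp.
  intros [a b] Hab t Ht. simpl in *. rewrite Rmin_left in Ht by lra.
  apply Hfg. lra.
Qed.

Lemma is_RInt_0_oo_scal (f : R -> R) l p :
  is_RInt_0_oo f l -> is_RInt_0_oo (fun t => p * f t) (p * l).
Proof. exact (is_RInt_gen_scal (V := R_NormedModule) f p l). Qed.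

Lemma is_RInt_0_oo_lin (f g : R -> R) lf lg p q :
  is_RInt_0_oo f lf -> is_RInt_0_oo g lg ->
  is_RInt_0_oo (fun t => p * f t + q * g t) (p * lf + q * lg).
Proof.
  intros Hf Hg.
  exact (is_RInt_gen_plus _ _ _ _ (is_RInt_0_oo_scal _ _ p Hf) (is_RInt_0_oo_scal _ _ q Hg)).
Qed.

Lemma is_RInt_0_oo_unique (f : R -> R) l : is_RInt_0_oo f l -> RInt_0_oo f = l.
Proof. apply (is_RInt_gen_unique (V := R_CompleteNormedModule)). Qed.

Lemma is_RInt_0_oo_Rabs_le (f g : R -> R) lf lg :
  (forall t, 0 < t -> Rabs (f t) <= g t) ->
  is_RInt_0_oo f lf -> is_RInt_0_oo g lg -> Rabs lf <= lg.
Proof.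
  intros Hfg. apply (RInt_gen_norm (V := R_CompleteNormedModule)).
  - generalize filter_prod_0_oo. apply filter_imp. intros ab H. lra.
  - generalize filter_prod_0_oo. apply filter_imp. intros ab H t Ht.
    apply Hfg. lra.
Qed.

Lemma is_RInt_0_oo_derive (f F : R -> R) la lb :
  (forall t, 0 < t -> is_derive F t (f t)) ->
  (forall t, 0 < t -> continuous f t) ->
  filterlim F (at_right 0) (locally la) ->
  filterlim F (Rbar_locally p_infty) (locally lb) ->
  is_RInt_0_oo f (lb - la).
Proof.
  intros HF Hf Hla Hlb.
  apply filterlimi_lim_ext_loc with (fun ab => F (snd ab) - F (fst ab)).
  - generalize filter_prod_0_oo. apply filter_imp. intros [a b] Hab. simpl in *.
    apply (is_RInt_derive (V := R_CompleteNormedModule));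
      intros t Ht; rewrite Rmin_left in Ht by lra; [apply HF | apply Hf]; lra.
  - eapply (filterlim_comp_2 (fun ab => F (snd ab)) (fun ab => opp (F (fst ab))) plus).
    + apply (filterlim_comp _ _ _ snd F _ (Rbar_locally p_infty)). apply filterlim_snd. exact Hlb.
    + apply (filterlim_comp _ _ _ fst (fun a => opp (F a)) _ (at_right 0)).
      apply filterlim_fst.
      eapply filterlim_comp. exact Hla. apply (filterlim_opp (V := R_NormedModule)).
    + apply (filterlim_plus (K := R_AbsRing) (V := R_NormedModule)).
Qed.

Lemma ex_derive_continuous_R (f : R -> R) x : ex_derive f x -> continuous f x.
Proof. apply (ex_derive_continuous (K := R_AbsRing) (V := R_NormedModule)). Qed.

Lemma ex_RInt_pos (f : R -> R) x y :
  0 < x -> 0 < y -> (forall t, 0 < t -> continuous f t) -> ex_RInt f x y.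
Proof.
  intros Hx Hy Hf. apply (ex_RInt_continuous (V := R_CompleteNormedModule)).
  intros t Ht. apply Hf. assert (0 < Rmin x y) by (apply Rmin_glb_lt; lra). lra.
Qed.

Lemma Rabs_RInt_le_primitive (f g G : R -> R) x y :
  0 < x -> 0 < y ->
  (forall t, 0 < t -> continuous f t) ->
  (forall t, 0 < t -> continuous g t) ->
  (forall t, 0 < t -> is_derive G t (g t)) ->
  (forall t, 0 < t -> Rabs (f t) <= g t) ->
  Rabs (RInt f x y) <= Rabs (G y - G x).
Proof.
  intros Hx Hy Hf Hg HG Hfg.
  assert (Hle : forall u v, 0 < u <= v -> Rabs (RInt f u v) <= G v - G u).
  { intros u v Huv.
    apply (norm_RInt_le (V := R_CompleteNormedModule) f g u v); try lra.
    - intros t Ht. apply Hfg. lra.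
    - apply (RInt_correct (V := R_CompleteNormedModule)), ex_RInt_pos; auto; lra.
    - apply (is_RInt_derive (V := R_CompleteNormedModule)); intros t Ht;
        rewrite Rmin_left in Ht by lra; [apply HG | apply Hg]; lra. }
  destruct (Rle_or_lt x y) as [Hxy | Hyx].
  - specialize (Hle x y (conj Hx Hxy)).
    rewrite (Rabs_pos_eq (G y - G x)); [lra | generalize (Rabs_pos (RInt f x y)); lra].
  - specialize (Hle y x (conj Hy (Rlt_le _ _ Hyx))).
    rewrite <- (opp_RInt_swap (V := R_CompleteNormedModule)) by (apply ex_RInt_pos; auto).
    change (Rabs (- RInt f y x) <= Rabs (G y - G x)).
    rewrite Rabs_Ropp, Rabs_minus_sym, (Rabs_pos_eq (G x - G y));
      [lra | generalize (Rabs_pos (RInt f y x)); lra].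
Qed.

Lemma ex_RInt_0_oo_dominated (f g G : R -> R) la lb :
  (forall t, 0 < t -> continuous f t) ->
  (forall t, 0 < t -> continuous g t) ->
  (forall t, 0 < t -> is_derive G t (g t)) ->
  (forall t, 0 < t -> Rabs (f t) <= g t) ->
  filterlim G (at_right 0) (locally la) ->
  filterlim G (Rbar_locally p_infty) (locally lb) ->
  exists l, is_RInt_0_oo f l.
Proof.
  intros Hf Hg HG Hfg Hla Hlb.
  destruct (proj1 (Hierarchy.filterlim_locally_cauchy
                     (F := filter_prod (at_right 0) (Rbar_locally p_infty))
                     (fun ab => RInt f (fst ab) (snd ab)))) as [l Hl].
  - intros eps.
    assert (He : 0 < eps / 4) by (generalize (cond_pos eps); lra).
    set (Pa := fun a => 0 < a /\ Rabs (G a - la) < eps / 4).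
    set (Pb := fun b => 0 < b /\ Rabs (G b - lb) < eps / 4).
    exists (fun ab => Pa (fst ab) /\ Pb (snd ab)). split.
    + apply (Filter_prod _ _ _ Pa Pb); [| | now intros].
      * apply filter_and. apply at_right_0_pos.
        exact (proj1 (filterlim_locally G la) Hla (mkposreal _ He)).
      * apply filter_and. apply p_infty_pos.
        exact (proj1 (filterlim_locally G lb) Hlb (mkposreal _ He)).
    + intros [u1 u2] [v1 v2] [[Hu1 Gu1] [Hu2 Gu2]] [[Hv1 Gv1] [Hv2 Gv2]]. simpl in *.
      change (Rabs (RInt f v1 v2 - RInt f u1 u2) < eps).
      rewrite <- (RInt_Chasles (V := R_CompleteNormedModule) f v1 u1 v2),
        <- (RInt_Chasles (V := R_CompleteNormedModule) f u1 u2 v2)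
        by (apply ex_RInt_pos; auto).
      change (Rabs (RInt f v1 u1 + (RInt f u1 u2 + RInt f u2 v2) - RInt f u1 u2) < eps).
      replace (RInt f v1 u1 + (RInt f u1 u2 + RInt f u2 v2) - RInt f u1 u2)
        with (RInt f v1 u1 + RInt f u2 v2) by ring.
      generalize (Rabs_RInt_le_primitive f g G v1 u1 Hv1 Hu1 Hf Hg HG Hfg)
        (Rabs_RInt_le_primitive f g G u2 v2 Hu2 Hv2 Hf Hg HG Hfg)
        (Rabs_triang (RInt f v1 u1) (RInt f u2 v2)).
      apply Rabs_def2 in Gu1, Gu2, Gv1, Gv2.
      assert (Rabs (G u1 - G v1) < eps / 2) by (apply Rabs_def1; lra).
      assert (Rabs (G v2 - G u2) < eps / 2) by (apply Rabs_def1; lra).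
      lra.
  - exists l. apply filterlimi_lim_ext_loc with (fun ab => RInt f (fst ab) (snd ab)); [| exact Hl].
    generalize filter_prod_0_oo. apply filter_imp. intros ab Hab.
    apply (RInt_correct (V := R_CompleteNormedModule)), ex_RInt_pos; auto; lra.
Qed.

Lemma filterlim_Rabs_le_0 {T} (F : (T -> Prop) -> Prop) {FF : Filter F} (f g : T -> R) :
  F (fun t => Rabs (f t) <= g t) -> filterlim g F (locally 0) -> filterlim f F (locally 0).
Proof.
  intros Hfg Hg. apply filterlim_locally. intros eps.
  generalize (filter_and _ _ Hfg (proj1 (filterlim_locally g 0) Hg eps)). apply filter_imp.
  intros t [H1 H2]. change (Rabs (f t - 0) < eps). change (Rabs (g t - 0) < eps) in H2.
  rewrite Rminus_0_r in *. apply Rabs_def2 in H2. lra.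
Qed.

Lemma filterlim_Rplus {T} (F : (T -> Prop) -> Prop) {FF : Filter F} (f g : T -> R) x y :
  filterlim f F (locally x) -> filterlim g F (locally y) ->
  filterlim (fun t => f t + g t) F (locally (x + y)).
Proof.
  intros Hf Hg. eapply filterlim_comp_2; eauto.
  apply (filterlim_plus (K := R_AbsRing) (V := R_NormedModule)).
Qed.

Lemma filterlim_Rmult_l {T} (F : (T -> Prop) -> Prop) {FF : Filter F} (f : T -> R) k x :
  filterlim f F (locally x) -> filterlim (fun t => k * f t) F (locally (k * x)).
Proof.
  intros Hf. eapply filterlim_comp_2; eauto. apply filterlim_const.
  apply (filterlim_mult (K := R_AbsRing)).
Qed.

Lemma Rpower_at_right_0 a : 0 < a -> filterlim (fun t => Rpower t a) (at_right 0) (locally 0).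
Proof.
  intros Ha. apply filterlim_locally. intros eps.
  exists (mkposreal _ (exp_pos (ln eps / a))). intros t Ht Ht0.
  change (Rabs (t - 0) < exp (ln eps / a)) in Ht.
  change (Rabs (Rpower t a - 0) < eps).
  rewrite Rminus_0_r in *. rewrite Rabs_pos_eq in * by (try apply Rlt_le, exp_pos; lra).
  rewrite <- (exp_ln eps) by apply cond_pos. apply exp_increasing.
  apply ln_increasing in Ht; [| lra]. rewrite ln_exp in Ht.
  apply (Rmult_lt_compat_l a) in Ht; [| lra].
  replace (a * (ln eps / a)) with (ln eps) in Ht by (field; lra). exact Ht.
Qed.

Lemma exp_opp_at_p_infty k :
  0 < k -> filterlim (fun t => exp (- (k * t))) (Rbar_locally p_infty) (locally 0).
Proof.
  intros Hk. apply filterlim_locally. intros eps.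
  exists (- ln eps / k). intros t Ht. change (Rabs (exp (- (k * t)) - 0) < eps).
  rewrite Rminus_0_r, Rabs_pos_eq by apply Rlt_le, exp_pos.
  rewrite <- (exp_ln eps) by apply cond_pos. apply exp_increasing.
  apply (Rmult_lt_compat_l k) in Ht; [| lra].
  replace (k * (- ln eps / k)) with (- ln eps) in Ht by (field; lra). lra.
Qed.

Lemma nat_above (a : R) : exists n : nat, (1 <= n)%nat /\ a <= INR n.
Proof.
  destruct (Rle_or_lt a 0) as [Ha | Ha].
  - exists 1%nat. simpl. split; [lia | lra].
  - destruct (archimed a) as [Hup _].
    assert (0 < up a)%Z by (apply lt_IZR; simpl; lra).
    exists (Z.to_nat (up a)). split; [lia |].
    rewrite INR_IZR_INZ, Z2Nat.id by lia. lra.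
Qed.

Lemma Rpower_pos t a : 0 < Rpower t a.
Proof. apply exp_pos. Qed.

Lemma Rpower_pred t a : 0 < t -> Rpower t (a - 1) = Rpower t a / t.
Proof.
  intros Ht. unfold Rpower. replace ((a - 1) * ln t) with (a * ln t + - ln t) by ring.
  now rewrite exp_plus, exp_Ropp, exp_ln.
Qed.

Lemma Rpower_le_1_plus_pow u a (m : nat) :
  0 < u -> 0 <= a <= INR m -> Rpower u a <= 1 + u ^ m.
Proof.
  intros Hu Ha. generalize (pow_le u m (Rlt_le _ _ Hu)). intros Hum.
  destruct (Rle_or_lt u 1) as [Hu1 | Hu1].
  - assert (Rpower u a <= Rpower 1 a) by (apply Rle_Rpower_l; lra).
    unfold Rpower at 2 in H. rewrite ln_1, Rmult_0_r, exp_0 in H. lra.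
  - rewrite <- Rpower_pow by lra.
    assert (Rpower u a <= Rpower u (INR m)) by (apply Rle_Rpower; lra). lra.
Qed.

Lemma Rpower_le_exp_half a :
  0 <= a -> exists K, forall t, 0 < t -> Rpower t a <= K * exp (t / 2).
Proof.
  intros Ha. destruct (nat_above a) as [n [Hn Han]].
  assert (Hn' : 1 <= INR n) by (apply (le_INR 1); lia).
  exists (1 + (2 * INR n) ^ n). intros t Ht.
  assert (Hpow : t ^ n <= (2 * INR n) ^ n * exp (t / 2)).
  { replace (t ^ n) with ((2 * INR n) ^ n * (t / (2 * INR n)) ^ n)
      by (rewrite <- Rpow_mult_distr; f_equal; field; lra).
    replace (exp (t / 2)) with (exp (t / (2 * INR n)) ^ n)
      by (rewrite <- Rpower_pow by apply exp_pos; unfold Rpower;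
          rewrite ln_exp; f_equal; field; lra).
    apply Rmult_le_compat_l; [apply pow_le; lra |].
    apply pow_incr. split; [apply Rlt_le, Rdiv_lt_0_compat; lra |].
    generalize (exp_ineq1_le (t / (2 * INR n))). lra. }
  assert (1 <= exp (t / 2)) by (generalize (exp_ineq1_le (t / 2)); lra).
  generalize (Rpower_le_1_plus_pow t a n Ht (conj Ha Han)). nra.
Qed.

Lemma Rpower_exp_dominated_lim_0 a (h : R -> R) :
  0 < a -> (forall t, 0 < t -> Rabs (h t) <= Rpower t a * exp (- t)) ->
  filterlim h (at_right 0) (locally 0) /\ filterlim h (Rbar_locally p_infty) (locally 0).
Proof.
  intros Ha Hh. split.
  - apply (filterlim_Rabs_le_0 _ h (fun t => Rpower t a)); [| now apply Rpower_at_right_0].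
    generalize at_right_0_pos. apply filter_imp. intros t Ht.
    assert (exp (- t) < 1) by (rewrite <- exp_0; apply exp_increasing; lra).
    generalize (Hh t Ht) (Rpower_pos t a). nra.
  - destruct (Rpower_le_exp_half a) as [K HK]; [lra |].
    apply (filterlim_Rabs_le_0 _ h (fun t => K * exp (- (/ 2 * t)))).
    + generalize p_infty_pos. apply filter_imp. intros t Ht.
      assert (E : exp (t / 2) * exp (- t) = exp (- (/ 2 * t)))
        by (rewrite <- exp_plus; f_equal; field).
      eapply Rle_trans; [now apply Hh |]. rewrite <- E, <- Rmult_assoc.
      apply Rmult_le_compat_r; [apply Rlt_le, exp_pos | now apply HK].
    + rewrite <- (Rmult_0_r K). apply (filterlim_Rmult_l _ _).
      apply exp_opp_at_p_infty, Rinv_0_lt_compat. lra.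
Qed.

Lemma continuous_at_right_0 (f : R -> R) :
  continuous f 0 -> filterlim f (at_right 0) (locally (f 0)).
Proof. intros Hf. eapply filterlim_filter_le_1; [apply filter_le_within | exact Hf]. Qed.

(** * The Gamma integrals *)

Definition Gamma_part (T : R -> R) (a b t : R) : R :=
  Rpower t (a - 1) * T (b * ln t) * exp (- t).

Lemma Gamma_eq (s : C) :
  Gamma s = (RInt_0_oo (Gamma_part cos (Re s) (Im s)), RInt_0_oo (Gamma_part sin (Re s) (Im s))).
Proof. reflexivity. Qed.

Section GammaPart.

Variable T : R -> R.
Hypothesis T_bound : forall x, Rabs (T x) <= 1.
Hypothesis T_lipschitz : forall x y, Rabs (T x - T y) <= Rabs (x - y).

Lemma continuous_Gamma_part a b t : 0 < t -> continuous (Gamma_part T a b) t.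
Proof.
  intros Ht. unfold Gamma_part.
  assert (HT : continuous T (b * ln t)).
  { apply filterlim_locally. intros eps. exists eps. intros x Hx.
    eapply Rle_lt_trans; [apply T_lipschitz | exact Hx]. }
  apply (continuous_mult (K := R_AbsRing)); [apply (continuous_mult (K := R_AbsRing)) |].
  - apply ex_derive_continuous_R. unfold Rpower. auto_derive. lra.
  - apply (continuous_comp (fun t => b * ln t) T); [| exact HT].
    apply ex_derive_continuous_R. auto_derive. lra.
  - apply ex_derive_continuous_R. auto_derive. auto.
Qed.

Lemma Rabs_Gamma_part_le a b t :
  0 < t -> Rabs (Gamma_part T a b t) <= Rpower t (a - 1) * exp (- t).
Proof.
  intros Ht. unfold Gamma_part.
  rewrite !Rabs_mult, (Rabs_pos_eq (Rpower _ _)), (Rabs_pos_eq (exp _))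
    by (apply Rlt_le; try apply Rpower_pos; apply exp_pos).
  assert (0 < Rpower t (a - 1) * exp (- t)) by (apply Rmult_lt_0_compat; apply exp_pos).
  generalize (T_bound (b * ln t)). nra.
Qed.

Lemma Gamma_part_lim_0 a b : 0 < a ->
  filterlim (Gamma_part T (a + 1) b) (at_right 0) (locally 0) /\
  filterlim (Gamma_part T (a + 1) b) (Rbar_locally p_infty) (locally 0).
Proof.
  intros Ha. apply (Rpower_exp_dominated_lim_0 a); auto.
  intros t Ht. replace a with (a + 1 - 1) at 2 by ring. now apply Rabs_Gamma_part_le.
Qed.

Lemma is_RInt_Gamma_part a b :
  0 < a -> is_RInt_0_oo (Gamma_part T a b) (RInt_0_oo (Gamma_part T a b)).
Proof.
  intros Ha. destruct (Rpower_le_exp_half a) as [K HK]; [lra |].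
  set (g t := Rpower t (a - 1) * exp (- t) + (K * exp (- (/ 2 * t)) - Rpower t a * exp (- t)) / a).
  set (G t := / a * (Rpower t a * exp (- t) + - 2 * K * exp (- (/ 2 * t)))).
  destruct (Rpower_exp_dominated_lim_0 a (fun t => Rpower t a * exp (- t)) Ha) as [H0 Hoo].
  { intros t Ht. rewrite Rabs_pos_eq; [lra |]. apply Rlt_le, Rmult_lt_0_compat; apply exp_pos. }
  (* g = G' dominates |Gamma_part T a b| because t^a e^(-t) <= K e^(-t/2). *)
  assert (Hex : exists l, is_RInt_0_oo (Gamma_part T a b) l).
  { apply (ex_RInt_0_oo_dominated _ g G (/ a * (0 + - 2 * K * exp (- (/ 2 * 0))))
                                      (/ a * (0 + - 2 * K * 0))).
    - apply continuous_Gamma_part.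
    - intros t Ht. apply ex_derive_continuous_R.
      unfold g, Rpower. auto_derive. lra.
    - intros t Ht. unfold G, g, Rpower. auto_derive; [lra |].
      change (exp ((a - 1) * ln t)) with (Rpower t (a - 1)).
      rewrite Rpower_pred by lra. unfold Rpower. field. lra.
    - intros t Ht. eapply Rle_trans; [apply Rabs_Gamma_part_le; lra |]. unfold g.
      assert (E : exp (t / 2) * exp (- t) = exp (- (/ 2 * t)))
        by (rewrite <- exp_plus; f_equal; field).
      cut (0 <= (K * exp (- (/ 2 * t)) - Rpower t a * exp (- t)) / a); [lra |].
      apply Rdiv_le_0_compat; [| lra]. rewrite <- E.
      generalize (HK t Ht) (exp_pos (- t)). nra.
    - apply (filterlim_Rmult_l _ _), (filterlim_Rplus _ _ _); [exact H0 |].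
      apply (filterlim_Rmult_l _ _), continuous_at_right_0.
      apply ex_derive_continuous_R. auto_derive. auto.
    - apply (filterlim_Rmult_l _ _), (filterlim_Rplus _ _ _); [exact Hoo |].
      apply (filterlim_Rmult_l _ _), exp_opp_at_p_infty, Rinv_0_lt_compat. lra. }
  destruct Hex as [l Hl]. now rewrite (is_RInt_0_oo_unique _ _ Hl).
Qed.

End GammaPart.

Lemma cos_bound x : Rabs (cos x) <= 1.
Proof. apply Rabs_le, COS_bound. Qed.

Lemma sin_bound x : Rabs (sin x) <= 1.
Proof. apply Rabs_le, SIN_bound. Qed.

Lemma Rabs_sin_le x : Rabs (sin x) <= Rabs x.
Proof.
  assert (Hpos : forall x, 0 <= x -> Rabs (sin x) <= x).
  { intros y Hy. destruct (Rle_or_lt 1 y) as [Hy1 | Hy1].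
    - generalize (sin_bound y). lra.
    - destruct (Req_dec y 0) as [-> | Hy0]; [rewrite sin_0, Rabs_R0; lra |].
      assert (0 <= sin y) by (apply sin_ge_0; generalize PI2_3_2; lra).
      rewrite Rabs_pos_eq by lra. apply Rlt_le, sin_lt_x. lra. }
  destruct (Rle_or_lt 0 x) as [Hx | Hx].
  - rewrite (Rabs_pos_eq x) by lra. now apply Hpos.
  - rewrite (Rabs_left x), <- Rabs_Ropp, <- sin_neg by lra. apply Hpos. lra.
Qed.

Lemma Rabs_two_sin_half_mul_le x c : Rabs c <= 1 -> Rabs (2 * sin (x / 2) * c) <= Rabs x.
Proof.
  intros Hc. rewrite !Rabs_mult, (Rabs_pos_eq 2) by lra.
  replace (Rabs x) with (2 * Rabs (x / 2) * 1)
    by (unfold Rdiv; rewrite Rabs_mult, (Rabs_pos_eq (/ 2)) by lra; field).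
  apply Rmult_le_compat; try apply Rmult_le_pos; try apply Rabs_pos; try lra.
  apply Rmult_le_compat_l; [lra | apply Rabs_sin_le].
Qed.

Lemma cos_lipschitz x y : Rabs (cos x - cos y) <= Rabs (x - y).
Proof.
  rewrite form2, <- Rabs_Ropp.
  replace (- (-2 * sin ((x - y) / 2) * sin ((x + y) / 2)))
    with (2 * sin ((x - y) / 2) * sin ((x + y) / 2)) by ring.
  apply Rabs_two_sin_half_mul_le, sin_bound.
Qed.

Lemma sin_lipschitz x y : Rabs (sin x - sin y) <= Rabs (x - y).
Proof.
  rewrite form4.
  replace (2 * cos ((x + y) / 2) * sin ((x - y) / 2))
    with (2 * sin ((x - y) / 2) * cos ((x + y) / 2)) by ring.
  apply Rabs_two_sin_half_mul_le, cos_bound.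
Qed.

(* Integration by parts against t^a T (b ln t) e^(-t), whose boundary values vanish. *)
Lemma is_RInt_Gamma_succ a b gc gs : 0 < a ->
  is_RInt_0_oo (Gamma_part cos a b) gc -> is_RInt_0_oo (Gamma_part sin a b) gs ->
  is_RInt_0_oo (Gamma_part cos (a + 1) b) (a * gc - b * gs) /\
  is_RInt_0_oo (Gamma_part sin (a + 1) b) (a * gs + b * gc).
Proof.
  intros Ha Hc Hs.
  destruct (Gamma_part_lim_0 cos cos_bound a b Ha) as [Hc0 Hcoo].
  destruct (Gamma_part_lim_0 sin sin_bound a b Ha) as [Hs0 Hsoo].
  assert (Dc : is_RInt_0_oo (fun t => a * Gamma_part cos a b t + - b * Gamma_part sin a b t
                                      - Gamma_part cos (a + 1) b t) (0 - 0)).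
  { apply (is_RInt_0_oo_derive _ (Gamma_part cos (a + 1) b)); auto; intros t Ht;
      [| apply ex_derive_continuous_R];
      unfold Gamma_part, Rpower; auto_derive; try lra.
    replace (a + 1 - 1) with a by ring.
    change (exp ((a - 1) * ln t)) with (Rpower t (a - 1)).
    rewrite Rpower_pred by lra. unfold Rpower. field. lra. }
  assert (Ds : is_RInt_0_oo (fun t => a * Gamma_part sin a b t + b * Gamma_part cos a b t
                                      - Gamma_part sin (a + 1) b t) (0 - 0)).
  { apply (is_RInt_0_oo_derive _ (Gamma_part sin (a + 1) b)); auto; intros t Ht;
      [| apply ex_derive_continuous_R];
      unfold Gamma_part, Rpower; auto_derive; try lra.
    replace (a + 1 - 1) with a by ring.
    change (exp ((a - 1) * ln t)) with (Rpower t (a - 1)).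
    rewrite Rpower_pred by lra. unfold Rpower. field. lra. }
  split.
  - generalize (is_RInt_0_oo_lin _ _ _ _ 1 (-1) (is_RInt_0_oo_lin _ _ _ _ a (- b) Hc Hs) Dc).
    replace (1 * (a * gc + - b * gs) + -1 * (0 - 0)) with (a * gc - b * gs) by ring.
    apply is_RInt_0_oo_ext. intros. ring.
  - generalize (is_RInt_0_oo_lin _ _ _ _ 1 (-1) (is_RInt_0_oo_lin _ _ _ _ a b Hs Hc) Ds).
    replace (1 * (a * gs + b * gc) + -1 * (0 - 0)) with (a * gs + b * gc) by ring.
    apply is_RInt_0_oo_ext. intros. ring.
Qed.

Lemma is_RInt_Gamma_part_cos a b :
  0 < a -> is_RInt_0_oo (Gamma_part cos a b) (RInt_0_oo (Gamma_part cos a b)).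
Proof. apply is_RInt_Gamma_part; [apply cos_bound | apply cos_lipschitz]. Qed.

Lemma is_RInt_Gamma_part_sin a b :
  0 < a -> is_RInt_0_oo (Gamma_part sin a b) (RInt_0_oo (Gamma_part sin a b)).
Proof. apply is_RInt_Gamma_part; [apply sin_bound | apply sin_lipschitz]. Qed.

Lemma Gamma_succ s : 0 < Re s -> Gamma (s + 1)%C = (s * Gamma s)%C.
Proof.
  intros Hs. rewrite !Gamma_eq.
  replace (Re (s + 1)%C) with (Re s + 1) by (unfold Re; simpl; ring).
  replace (Im (s + 1)%C) with (Im s) by (unfold Im; simpl; ring).
  destruct (is_RInt_Gamma_succ _ _ _ _ Hs (is_RInt_Gamma_part_cos _ (Im s) Hs)
              (is_RInt_Gamma_part_sin _ (Im s) Hs)) as [Hc Hs'].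
  rewrite (is_RInt_0_oo_unique _ _ Hc), (is_RInt_0_oo_unique _ _ Hs').
  destruct s as [x y]. unfold Cmult. simpl. f_equal; ring.
Qed.

Lemma is_RInt_exp_opp : is_RInt_0_oo (fun t => exp (- t)) 1.
Proof.
  replace 1 with (-1 * 0 - -1 * exp (- (1 * 0))) by (rewrite !Rmult_0_r, Ropp_0, exp_0; ring).
  apply (is_RInt_0_oo_derive _ (fun t => -1 * exp (- (1 * t)))).
  - intros t _. auto_derive; [auto |]. rewrite !Rmult_1_l. ring.
  - intros t _. apply ex_derive_continuous_R.
    auto_derive. auto.
  - apply continuous_at_right_0, ex_derive_continuous_R.
    auto_derive. auto.
  - apply (filterlim_Rmult_l _ _), exp_opp_at_p_infty. lra.
Qed.

Lemma is_RInt_0_oo_0 : is_RInt_0_oo (fun _ => 0) 0.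
Proof.
  replace 0 with (0 - 0) at 2 by ring.
  apply (is_RInt_0_oo_derive _ (fun _ => 0)); intros.
  - auto_derive; auto.
  - apply continuous_const.
  - apply filterlim_const.
  - apply filterlim_const.
Qed.

Lemma Gamma_1 : Gamma 1 = 1.
Proof.
  rewrite Gamma_eq. simpl Re; simpl Im.
  rewrite (is_RInt_0_oo_unique _ 1), (is_RInt_0_oo_unique _ 0); [reflexivity | |].
  - apply (is_RInt_0_oo_ext (fun _ => 0)), is_RInt_0_oo_0.
    intros t _. unfold Gamma_part. rewrite Rmult_0_l, sin_0. ring.
  - apply (is_RInt_0_oo_ext (fun t => exp (- t))), is_RInt_exp_opp.
    intros t Ht. unfold Gamma_part. rewrite Rminus_diag, Rpower_O, Rmult_0_l, cos_0 by lra. ring.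
Qed.

Lemma Gamma_nat n : Gamma (RtoC (INR n + 1)) = RtoC (INR (fact n)).
Proof.
  induction n as [| n IH].
  - simpl INR. rewrite Rplus_0_l. exact Gamma_1.
  - rewrite S_INR, RtoC_plus, Gamma_succ, IH by (simpl; generalize (pos_INR n); lra).
    rewrite fact_simpl, mult_INR, S_INR, RtoC_mult. reflexivity.
Qed.

Lemma is_RInt_pow_exp k : is_RInt_0_oo (fun t => t ^ k * exp (- t)) (INR (fact k)).
Proof.
  assert (Hk : 0 < INR k + 1) by (generalize (pos_INR k); lra).
  generalize (is_RInt_Gamma_part_cos _ 0 Hk).
  replace (RInt_0_oo (Gamma_part cos (INR k + 1) 0)) with (INR (fact k))
    by exact (eq_sym (f_equal fst (Gamma_nat k))).
  apply is_RInt_0_oo_ext. intros t Ht. unfold Gamma_part.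
  replace (INR k + 1 - 1) with (INR k) by ring.
  rewrite Rpower_pow, Rmult_0_l, cos_0 by lra. ring.
Qed.

(** * Concentration of the weight t^N e^(-t) *)

Definition scaled_moment (N j : nat) : R := INR (fact (N + j)) / (INR (fact N) * INR N ^ j).

Lemma is_RInt_scaled_moment N j : (1 <= N)%nat ->
  is_RInt_0_oo (fun t => t ^ N * exp (- t) * (t / INR N) ^ j) (INR (fact N) * scaled_moment N j).
Proof.
  intros HN. assert (0 < INR N) by (apply lt_0_INR; lia).
  replace (INR (fact N) * scaled_moment N j) with (/ INR N ^ j * INR (fact (N + j)))
    by (unfold scaled_moment; field; split; first [apply INR_fact_neq_0 | apply pow_nonzero; lra]).
  apply (is_RInt_0_oo_ext (fun t => / INR N ^ j * (t ^ (N + j) * exp (- t)))).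
  - intros t _. rewrite pow_add. unfold Rdiv. rewrite Rpow_mult_distr, pow_inv. ring.
  - apply is_RInt_0_oo_scal, is_RInt_pow_exp.
Qed.

Lemma is_lim_seq_INR_plus_div c : is_lim_seq (fun N => (INR N + c) / INR N) 1.
Proof.
  apply is_lim_seq_ext_loc with (fun N => 1 + c * / INR N).
  - exists 1%nat. intros N HN. assert (0 < INR N) by (apply lt_0_INR; lia). field. lra.
  - replace (Finite 1) with (Finite (1 + c * 0)) by (f_equal; ring).
    apply is_lim_seq_plus', is_lim_seq_mult'; [apply is_lim_seq_const | apply is_lim_seq_const |].
    apply (is_lim_seq_inv _ p_infty is_lim_seq_INR). discriminate.
Qed.

Lemma is_lim_seq_scaled_moment j : is_lim_seq (fun N => scaled_moment N j) 1.
Proof.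
  induction j as [| j IH].
  - apply is_lim_seq_ext with (fun _ => 1); [| apply is_lim_seq_const].
    intros N. unfold scaled_moment. rewrite Nat.add_0_r. simpl. field. apply INR_fact_neq_0.
  - apply is_lim_seq_ext_loc with (fun N => scaled_moment N j * ((INR N + INR (S j)) / INR N)).
    + exists 1%nat. intros N HN. assert (0 < INR N) by (apply lt_0_INR; lia).
      unfold scaled_moment. rewrite Nat.add_succ_r, fact_simpl, mult_INR.
      replace (INR (S (N + j))) with (INR N + INR (S j)) by (rewrite !S_INR, plus_INR; ring).
      simpl pow. field.
      repeat split; first [apply INR_fact_neq_0 | apply pow_nonzero; lra | lra].
    + replace (Finite 1) with (Finite (1 * 1)) by (f_equal; ring).
      apply is_lim_seq_mult'; [exact IH | apply is_lim_seq_INR_plus_div].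
Qed.

Definition moment_bound (j : nat) (d : R) (N : nat) : R :=
  d * scaled_moment N j
  + (scaled_moment N (j + 2) - 2 * scaled_moment N (j + 1) + scaled_moment N j) / d.

Lemma is_RInt_moment_bound j d N : 0 < d -> (1 <= N)%nat ->
  is_RInt_0_oo (fun t => t ^ N * exp (- t) * ((d + (t / INR N - 1) ^ 2 / d) * (t / INR N) ^ j))
    (INR (fact N) * moment_bound j d N).
Proof.
  intros Hd HN.
  generalize (is_RInt_scaled_moment N j HN) (is_RInt_scaled_moment N (j + 1) HN)
    (is_RInt_scaled_moment N (j + 2) HN). intros Mj Mj1 Mj2.
  replace (INR (fact N) * moment_bound j d N) with
    (d * (INR (fact N) * scaled_moment N j)
     + / d * (1 * (1 * (INR (fact N) * scaled_moment N (j + 2))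
                   + -2 * (INR (fact N) * scaled_moment N (j + 1)))
              + 1 * (INR (fact N) * scaled_moment N j)))
    by (unfold moment_bound; field; lra).
  generalize (is_RInt_0_oo_lin _ _ _ _ d (/ d) Mj
    (is_RInt_0_oo_lin _ _ _ _ 1 1 (is_RInt_0_oo_lin _ _ _ _ 1 (-2) Mj2 Mj1) Mj)).
  assert (0 < INR N) by (apply lt_0_INR; lia).
  apply is_RInt_0_oo_ext. intros t _. rewrite !pow_add. field. split; lra.
Qed.

Lemma is_lim_seq_moment_bound j d : 0 < d -> is_lim_seq (moment_bound j d) d.
Proof.
  intros Hd. unfold moment_bound.
  replace (Finite d) with (Finite (d * 1 + (1 - 2 * 1 + 1) / d)) by (f_equal; field; lra).
  apply is_lim_seq_plus'; [apply is_lim_seq_mult'; [apply is_lim_seq_const |] |];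
    [| apply is_lim_seq_mult'; [| apply is_lim_seq_const]];
    repeat first [apply is_lim_seq_minus' | apply is_lim_seq_plus'
                 | apply is_lim_seq_mult'; [apply is_lim_seq_const |]];
    apply is_lim_seq_scaled_moment.
Qed.

Lemma Rabs_le_half_plus_sq_div v d : 0 < d -> Rabs v <= (d + v ^ 2 / d) / 2.
Proof.
  intros Hd. rewrite <- pow2_abs.
  assert (0 <= (d - Rabs v) ^ 2 / d) by (apply Rdiv_le_0_compat; [apply pow2_ge_0 | lra]).
  replace ((d - Rabs v) ^ 2 / d) with (d - 2 * Rabs v + Rabs v ^ 2 / d) in H by (field; lra).
  lra.
Qed.

Lemma Rabs_pow_exp_integral_le (phi : R -> R) l K (m : nat) d N :
  0 <= K -> 0 < d -> (1 <= N)%nat ->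
  (forall u, 0 < u -> Rabs (phi u) <= K * Rabs (u - 1) * (1 + u ^ m)) ->
  is_RInt_0_oo (fun t => t ^ N * exp (- t) * phi (t / INR N)) l ->
  Rabs l / INR (fact N) <= K / 2 * (moment_bound 0 d N + moment_bound m d N).
Proof.
  intros HK Hd HN Hphi Hl.
  assert (HF : 0 < INR (fact N)) by apply INR_fact_lt_0.
  assert (HN' : 0 < INR N) by (apply lt_0_INR; lia).
  apply Rle_trans with ((K / 2 * (INR (fact N) * moment_bound 0 d N)
                         + K / 2 * (INR (fact N) * moment_bound m d N)) / INR (fact N));
    [apply Rmult_le_compat_r; [apply Rlt_le, Rinv_0_lt_compat; lra |] | right; field; lra].
  refine (is_RInt_0_oo_Rabs_le _ _ _ _ _ Hl
            (is_RInt_0_oo_lin _ _ _ _ _ _ (is_RInt_moment_bound 0 d N Hd HN)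
               (is_RInt_moment_bound m d N Hd HN))).
  intros t Ht. set (u := t / INR N). assert (Hu : 0 < u) by (apply Rdiv_lt_0_compat; lra).
  assert (Hw : 0 < t ^ N * exp (- t))
    by (apply Rmult_lt_0_compat; [apply pow_lt | apply exp_pos]; lra).
  rewrite Rabs_mult, (Rabs_pos_eq (t ^ N * exp (- t))) by lra.
  replace (K / 2 * (t ^ N * exp (- t) * ((d + (u - 1) ^ 2 / d) * u ^ 0))
           + K / 2 * (t ^ N * exp (- t) * ((d + (u - 1) ^ 2 / d) * u ^ m)))
    with (t ^ N * exp (- t) * (K * ((d + (u - 1) ^ 2 / d) / 2) * (1 + u ^ m)))
    by (simpl pow; field; lra).
  apply Rmult_le_compat_l; [lra |]. eapply Rle_trans; [now apply Hphi |].
  apply Rmult_le_compat_r; [generalize (pow_le u m); lra |].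
  apply Rmult_le_compat_l; [exact HK | now apply Rabs_le_half_plus_sq_div].
Qed.

(* Under the weight t^N e^(-t), u = t/N concentrates at 1: the bound above tends to K d
   (the second scaled moment about 1 vanishes in the limit), and d > 0 is arbitrary. *)
Lemma pow_exp_concentration (phi : nat -> R -> R) (I : nat -> R) K (m : nat) :
  (forall N u, 0 < u -> Rabs (phi N u) <= K * Rabs (u - 1) * (1 + u ^ m)) ->
  (forall N, (1 <= N)%nat ->
     is_RInt_0_oo (fun t => t ^ N * exp (- t) * phi N (t / INR N)) (I N)) ->
  is_lim_seq (fun N => I N / INR (fact N)) 0.
Proof.
  intros Hphi HI.
  assert (HK : 0 <= K).
  { generalize (Hphi 0%nat 2 Rlt_0_2) (Rabs_pos (phi 0%nat 2)) (pow_le 2 m).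
    replace (Rabs (2 - 1)) with 1 by (rewrite Rabs_pos_eq; lra). nra. }
  apply is_lim_seq_spec. intros eps.
  set (d := eps / (2 * (K + 1))).
  assert (Hd : 0 < d) by (apply Rdiv_lt_0_compat; [apply cond_pos | lra]).
  assert (Hd_def : d * (2 * (K + 1)) = eps) by (unfold d; field; lra).
  destruct (proj2 (is_lim_seq_spec _ _)
              (is_lim_seq_plus' _ _ _ _ (is_lim_seq_moment_bound 0 d Hd)
                 (is_lim_seq_moment_bound m d Hd)) (mkposreal d Hd)) as [N0 HN0].
  exists (max 1 N0). intros N HN.
  assert (HF : 0 < INR (fact N)) by apply INR_fact_lt_0.
  rewrite Rminus_0_r. unfold Rdiv at 1.
  rewrite Rabs_mult, (Rabs_pos_eq (/ _)) by (apply Rlt_le, Rinv_0_lt_compat; lra).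
  eapply Rle_lt_trans.
  { apply (Rabs_pow_exp_integral_le (phi N) (I N) K m d N HK Hd);
      [lia | apply Hphi | apply HI; lia]. }
  specialize (HN0 N ltac:(lia)). apply Rabs_def2 in HN0. simpl in HN0.
  assert (0 <= K * d) by (apply Rmult_le_pos; lra).
  apply Rle_lt_trans with (K / 2 * (3 * d)); [apply Rmult_le_compat_l; lra | lra].
Qed.

(** * Asymptotics of |Gamma (s + N + 1)| *)

Lemma ln_le_sub_1 x : 0 < x -> ln x <= x - 1.
Proof. intros Hx. generalize (exp_ineq1_le (ln x)). rewrite exp_ln by lra. lra. Qed.

Lemma Rabs_ln_le u : / 2 <= u -> Rabs (ln u) <= 2 * Rabs (u - 1).
Proof.
  intros Hu. assert (Hu0 : 0 < u) by lra.
  assert (Hup := ln_le_sub_1 u Hu0).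
  assert (Hlow := ln_le_sub_1 (/ u) (Rinv_0_lt_compat _ Hu0)). rewrite ln_Rinv in Hlow by lra.
  apply Rabs_le. destruct (Rle_or_lt 1 u) as [H1 | H1].
  - assert (/ u <= 1) by (rewrite <- Rinv_1; apply Rinv_le_contravar; lra).
    rewrite Rabs_pos_eq by lra. lra.
  - assert (/ u - 1 <= 2 * (1 - u)).
    { replace (/ u - 1) with ((1 - u) / u) by (field; lra).
      apply (Rmult_le_reg_r u); [lra |]. unfold Rdiv. rewrite Rmult_assoc, Rinv_l by lra. nra. }
    rewrite Rabs_left by lra. lra.
Qed.

Lemma Rabs_exp_sub_1_le s : Rabs (exp s - 1) <= Rabs s * (1 + exp s).
Proof.
  destruct (Rle_or_lt 0 s) as [Hs | Hs].
  - assert (E : exp (- s) * exp s = 1) by (rewrite <- exp_plus, Rplus_opp_l; apply exp_0).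
    generalize (exp_ineq1_le (- s)) (exp_ineq1_le s) (exp_pos s). intros H1 H2 H3.
    rewrite !Rabs_pos_eq by lra. nra.
  - generalize (exp_ineq1_le s) (exp_pos s). intros H1 H2.
    assert (exp s < 1) by (rewrite <- exp_0; apply exp_increasing; lra).
    rewrite Rabs_left, Rabs_left1 by lra. nra.
Qed.

(* For u < 1/2 the trivial bound 2 suffices; near u = 1 use |x - y| <= |b ln u| and
   |u^a - 1| <= a |ln u| (1 + u^a). *)
Lemma Rabs_Rpower_mul_sub_le a b (m : nat) u x y :
  0 <= a <= INR m -> 0 < u -> Rabs x <= 1 -> Rabs y <= 1 -> Rabs (x - y) <= Rabs (b * ln u) ->
  Rabs (Rpower u a * x - y) <= 4 * (1 + a + Rabs b) * Rabs (u - 1) * (1 + u ^ m).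
Proof.
  intros Ha Hu Hx Hy Hxy.
  assert (HP := Rpower_le_1_plus_pow u a m Hu Ha). assert (HP0 := Rpower_pos u a).
  set (Q := 1 + u ^ m) in *. assert (HQ : 1 <= Q) by (generalize (pow_le u m); unfold Q; lra).
  assert (Hb := Rabs_pos b). assert (Hu1 := Rabs_pos (u - 1)).
  apply Rle_trans with ((2 * Rabs b + 4 * a) * Rabs (u - 1) * Q + 4 * Rabs (u - 1) * Q);
    [| assert (0 <= Rabs (u - 1) * Q) by nra; nra].
  destruct (Rlt_or_le u (/ 2)) as [Hu2 | Hu2].
  - replace (Rpower u a * x - y) with (Rpower u a * x + - y) by ring.
    eapply Rle_trans; [apply Rabs_triang |].
    rewrite Rabs_mult, Rabs_Ropp, (Rabs_pos_eq (Rpower u a)) by lra.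
    rewrite (Rabs_left (u - 1)) by lra.
    assert (0 <= (2 * Rabs b + 4 * a) * - (u - 1) * Q)
      by (apply Rmult_le_pos; [apply Rmult_le_pos |]; lra).
    nra.
  - assert (HL := Rabs_ln_le u Hu2).
    assert (HE : Rabs (Rpower u a - 1) <= a * Rabs (ln u) * (2 * Q)).
    { eapply Rle_trans; [apply Rabs_exp_sub_1_le |]. fold (Rpower u a).
      rewrite Rabs_mult, (Rabs_pos_eq a) by lra.
      apply Rmult_le_compat_l; [apply Rmult_le_pos; [lra | apply Rabs_pos] | lra]. }
    replace (Rpower u a * x - y) with (Rpower u a * (x - y) + (Rpower u a - 1) * y) by ring.
    eapply Rle_trans; [apply Rabs_triang |].
    rewrite !Rabs_mult, (Rabs_pos_eq (Rpower u a)) by lra. rewrite Rabs_mult in Hxy.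
    assert (Rpower u a * Rabs (x - y) <= Q * (Rabs b * (2 * Rabs (u - 1))))
      by (apply Rmult_le_compat; try apply Rabs_pos; try lra;
          eapply Rle_trans; [exact Hxy | apply Rmult_le_compat_l; lra]).
    assert (Rabs (Rpower u a - 1) * Rabs y <= a * (2 * Rabs (u - 1)) * (2 * Q)).
    { apply Rle_trans with (Rabs (Rpower u a - 1) * 1);
        [apply Rmult_le_compat_l; [apply Rabs_pos | lra] |].
      rewrite Rmult_1_r. eapply Rle_trans; [exact HE |].
      apply Rmult_le_compat_r; [lra | apply Rmult_le_compat_l; lra]. }
    nra.
Qed.

(* With u = t / N, t^(a+N) T (b ln t) - N^a T (b ln N) t^N
   = N^a t^N (u^a T (b ln N + b ln u) - T (b ln N)). *)
Lemma Gamma_part_asymptotic (T : R -> R) a b :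
  (forall x, Rabs (T x) <= 1) -> (forall x y, Rabs (T x - T y) <= Rabs (x - y)) -> 0 < a ->
  is_lim_seq (fun N => RInt_0_oo (Gamma_part T (a + (INR N + 1)) b)
                       / (INR (fact N) * Rpower (INR N) a) - T (b * ln (INR N))) 0.
Proof.
  intros T_bound T_lipschitz Ha. destruct (nat_above a) as [m [_ Ham]].
  set (gamma N := RInt_0_oo (Gamma_part T (a + (INR N + 1)) b)).
  set (theta N := b * ln (INR N)).
  set (I N := (gamma N - Rpower (INR N) a * T (theta N) * INR (fact N)) / Rpower (INR N) a).
  apply is_lim_seq_ext_loc with (fun N => I N / INR (fact N)).
  { exists 1%nat. intros N _. unfold I, gamma, theta. field.
    split; first [apply INR_fact_neq_0 | apply Rgt_not_eq, Rpower_pos]. }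
  apply (pow_exp_concentration (fun N u => Rpower u a * T (theta N + b * ln u) - T (theta N)) I
           (4 * (1 + a + Rabs b)) m).
  - intros N u Hu. apply Rabs_Rpower_mul_sub_le; auto; [lra |].
    eapply Rle_trans; [apply T_lipschitz | right; f_equal; ring].
  - intros N HN. assert (HN' : 0 < INR N) by (apply lt_0_INR; lia).
    assert (HaN : 0 < a + (INR N + 1)) by lra.
    replace (I N) with (/ Rpower (INR N) a * gamma N + - T (theta N) * INR (fact N))
      by (unfold I; field; apply Rgt_not_eq, Rpower_pos).
    generalize (is_RInt_0_oo_lin _ _ _ _ (/ Rpower (INR N) a) (- T (theta N))
                  (is_RInt_Gamma_part T T_bound T_lipschitz _ b HaN) (is_RInt_pow_exp N)).
    apply is_RInt_0_oo_ext. intros t Ht. unfold Gamma_part, theta, Rpower.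
    rewrite ln_div by lra.
    replace (b * ln (INR N) + b * (ln t - ln (INR N))) with (b * ln t) by ring.
    replace ((a + (INR N + 1) - 1) * ln t) with (a * ln t + INR N * ln t) by ring.
    replace (a * (ln t - ln (INR N))) with (a * ln t + - (a * ln (INR N))) by ring.
    rewrite !exp_plus, !exp_Ropp. change (exp (INR N * ln t)) with (Rpower t (INR N)).
    rewrite Rpower_pow by lra. field. split; apply Rgt_not_eq, exp_pos.
Qed.

Lemma Rabs_Cmod_sub_le (v w : C) : Rabs (Cmod v - Cmod w) <= Cmod (v - w).
Proof.
  generalize (Cmod_triangle (v - w) w) (Cmod_triangle (w - v) v).
  replace (v - w + w)%C with v by ring. replace (w - v + v)%C with w by ring.
  replace (w - v)%C with (- (v - w))%C by ring. rewrite Cmod_opp.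
  intros. apply Rabs_le. lra.
Qed.

Lemma Cmod_le_Rabs_plus (x y : R) : Cmod (x, y) <= Rabs x + Rabs y.
Proof.
  unfold Cmod. cbn [fst snd].
  rewrite <- (sqrt_pow2 (Rabs x + Rabs y)) by (generalize (Rabs_pos x) (Rabs_pos y); lra).
  apply sqrt_le_1_alt. rewrite <- (pow2_abs x), <- (pow2_abs y).
  generalize (Rabs_pos x) (Rabs_pos y). nra.
Qed.

Lemma Cmod_cos_sin (x : R) : Cmod (cos x, sin x) = 1.
Proof.
  unfold Cmod. cbn [fst snd]. rewrite <- sqrt_1. f_equal.
  rewrite <- (sin2_cos2 x). unfold Rsqr. ring.
Qed.

Lemma Cmod_pair_div (x y D : R) : 0 < D -> Cmod (x, y) / D = Cmod (x / D, y / D).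
Proof.
  intros HD. unfold Cmod. simpl.
  rewrite <- (sqrt_pow2 D) at 1 by lra. rewrite <- sqrt_div_alt by (apply pow_lt; lra).
  f_equal. field. lra.
Qed.

Lemma Cmod_Gamma_shift_asymptotic s : 0 < Re s ->
  is_lim_seq (fun N => Cmod (Gamma (s + RtoC (INR N + 1))%C)
                       / (INR (fact N) * Rpower (INR N) (Re s))) 1.
Proof.
  intros Hs.
  set (D N := INR (fact N) * Rpower (INR N) (Re s)).
  set (theta N := Im s * ln (INR N)).
  set (gc N := RInt_0_oo (Gamma_part cos (Re s + (INR N + 1)) (Im s))).
  set (gs N := RInt_0_oo (Gamma_part sin (Re s + (INR N + 1)) (Im s))).
  assert (HP := Gamma_part_asymptotic cos (Re s) (Im s) cos_bound cos_lipschitz Hs).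
  assert (HQ := Gamma_part_asymptotic sin (Re s) (Im s) sin_bound sin_lipschitz Hs).
  assert (Herr : is_lim_seq (fun N => Rabs (gc N / D N - cos (theta N))
                                      + Rabs (gs N / D N - sin (theta N))) 0).
  { replace (Finite 0) with (Finite (Rabs 0 + Rabs 0)) by (rewrite Rabs_R0; f_equal; ring).
    apply is_lim_seq_plus'; apply (is_lim_seq_abs _ 0); assumption. }
  apply is_lim_seq_le_le_loc with
    (fun N => 1 - (Rabs (gc N / D N - cos (theta N)) + Rabs (gs N / D N - sin (theta N))))
    (fun N => 1 + (Rabs (gc N / D N - cos (theta N)) + Rabs (gs N / D N - sin (theta N)))).
  - exists 1%nat. intros N _.
    assert (HD : 0 < D N) by (apply Rmult_lt_0_compat; [apply INR_fact_lt_0 | apply Rpower_pos]).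
    assert (HG : Gamma (s + RtoC (INR N + 1))%C = (gc N, gs N)).
    { rewrite Gamma_eq. unfold gc, gs. do 3 f_equal; unfold Re, Im; simpl; ring. }
    rewrite HG, Cmod_pair_div, <- (Cmod_cos_sin (theta N)) by exact HD.
    generalize (Rabs_Cmod_sub_le (gc N / D N, gs N / D N) (cos (theta N), sin (theta N)))
      (Cmod_le_Rabs_plus (gc N / D N - cos (theta N)) (gs N / D N - sin (theta N))).
    change (Cmod (Cminus (gc N / D N, gs N / D N) (cos (theta N), sin (theta N))))
      with (Cmod (gc N / D N - cos (theta N), gs N / D N - sin (theta N))).
    intros H1 H2. apply Rabs_le_between in H1. unfold D in *. lra.
  - replace (Finite 1) with (Finite (1 - 0)) by (f_equal; ring).
    apply is_lim_seq_minus'; [apply is_lim_seq_const | exact Herr].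
  - replace (Finite 1) with (Finite (1 + 0)) by (f_equal; ring).
    apply is_lim_seq_plus'; [apply is_lim_seq_const | exact Herr].
Qed.

Lemma Gamma_neq_0 s : 0 < Re s -> Gamma s <> 0.
Proof.
  intros Hs H0.
  assert (Hn : forall n, Gamma (s + RtoC (INR n))%C = 0).
  { induction n as [| n IH].
    - simpl INR. now rewrite Cplus_0_r.
    - rewrite S_INR, RtoC_plus, Cplus_assoc, Gamma_succ, IH
        by (unfold Re in *; simpl; generalize (pos_INR n); lra).
      apply Cmult_0_r. }
  assert (Hlim : is_lim_seq (fun _ => 0) 1).
  { eapply is_lim_seq_ext; [| exact (Cmod_Gamma_shift_asymptotic s Hs)].
    intros N. cbv beta. rewrite <- S_INR, Hn, Cmod_0. unfold Rdiv. apply Rmult_0_l. }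
  assert (H01 := is_lim_seq_unique _ _ Hlim). rewrite Lim_seq_const in H01.
  injection H01. lra.
Qed.

(** * The elementary factor *)

Lemma ln_sub_bounds p q : 0 < p -> 0 < q -> 1 - q / p <= ln p - ln q <= p / q - 1.
Proof.
  intros Hp Hq.
  generalize (ln_le_sub_1 (p / q) (Rdiv_lt_0_compat _ _ Hp Hq))
    (ln_le_sub_1 (q / p) (Rdiv_lt_0_compat _ _ Hq Hp)).
  rewrite !ln_div by lra. lra.
Qed.

Lemma is_lim_seq_INR_div_plus k : is_lim_seq (fun N => INR N / (INR N + k)) 1.
Proof.
  apply is_lim_seq_ext_loc with (fun N => / ((INR N + k) / INR N)).
  - destruct (nat_above (Rabs k)) as [n0 [_ Hn0]]. exists (S n0). intros N HN.
    assert (INR n0 < INR N) by (apply lt_INR; lia).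
    generalize (pos_INR n0) (Rle_abs (- k)). rewrite Rabs_Ropp. intros.
    field. lra.
  - replace (Finite 1) with (Rbar_inv 1) by (simpl; f_equal; field).
    apply is_lim_seq_inv; [apply is_lim_seq_INR_plus_div | intros E; injection E; lra].
Qed.

Lemma is_lim_seq_INR_mul_ln_ratio c :
  0 < c -> is_lim_seq (fun N => INR N * (ln (INR N + c + 1) - ln (INR N + 1))) c.
Proof.
  intros Hc.
  apply is_lim_seq_le_le_loc with (fun N => c * (INR N / (INR N + (c + 1))))
                                  (fun N => c * (INR N / (INR N + 1))).
  - exists 1%nat. intros N HN. assert (0 < INR N) by (apply lt_0_INR; lia).
    destruct (ln_sub_bounds (INR N + c + 1) (INR N + 1)) as [Hlow Hup]; [lra | lra |].
    split.
    + replace (c * (INR N / (INR N + (c + 1))))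
        with (INR N * (1 - (INR N + 1) / (INR N + c + 1))) by (field; lra).
      apply Rmult_le_compat_l; lra.
    + replace (c * (INR N / (INR N + 1)))
        with (INR N * ((INR N + c + 1) / (INR N + 1) - 1)) by (field; lra).
      apply Rmult_le_compat_l; lra.
  - replace (Finite c) with (Rbar_mult c 1) by (simpl; f_equal; ring).
    apply is_lim_seq_scal_l, is_lim_seq_INR_div_plus.
  - replace (Finite c) with (Rbar_mult c 1) by (simpl; f_equal; ring).
    apply is_lim_seq_scal_l, is_lim_seq_INR_div_plus.
Qed.

Lemma is_lim_seq_ln_ratio c : is_lim_seq (fun N => ln (INR N + c) - ln (INR N)) 0.
Proof.
  apply is_lim_seq_ext_loc with (fun N => ln ((INR N + c) / INR N)).
  - destruct (nat_above (Rabs c)) as [n0 [_ Hn0]]. exists (S n0). intros N HN.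
    assert (INR n0 < INR N) by (apply lt_INR; lia).
    generalize (pos_INR n0) (Rle_abs (- c)). rewrite Rabs_Ropp. intros.
    apply ln_div; lra.
  - rewrite <- ln_1. apply is_lim_seq_continuous; [| apply is_lim_seq_INR_plus_div].
    apply derivable_continuous_pt. exists (/ 1). apply derivable_pt_lim_ln. lra.
Qed.

Lemma is_lim_seq_Rpower_ratio c : 0 < c ->
  is_lim_seq (fun N => Rpower (INR N + c + 1) (INR N + c + 1)
                       / ((INR N + 1) ^ N * Rpower (INR N) (c + 1))) (exp c).
Proof.
  intros Hc.
  apply is_lim_seq_ext_loc with
    (fun N => exp (INR N * (ln (INR N + c + 1) - ln (INR N + 1))
                   + (c + 1) * (ln (INR N + (c + 1)) - ln (INR N)))).
  - exists 1%nat. intros N HN. assert (0 < INR N) by (apply lt_0_INR; lia).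
    rewrite <- (Rpower_pow N (INR N + 1)) by lra. unfold Rpower, Rdiv.
    rewrite <- exp_plus, <- exp_Ropp, <- exp_plus. f_equal.
    replace (INR N + (c + 1)) with (INR N + c + 1) by ring. ring.
  - apply is_lim_seq_continuous; [apply derivable_continuous_pt, derivable_pt_exp |].
    replace (Finite c) with (Finite (c + (c + 1) * 0)) by (f_equal; ring).
    apply is_lim_seq_plus'; [now apply is_lim_seq_INR_mul_ln_ratio |].
    apply is_lim_seq_mult'; [apply is_lim_seq_const | apply is_lim_seq_ln_ratio].
Qed.

Lemma Re_RtoC_mult (r : R) (z : C) : Re (RtoC r * z)%C = r * Re z.
Proof. unfold Re. simpl. ring. Qed.

Lemma R_fact_ratio_eq lam A B (z : C) (N : nat) :
  0 < lam -> 0 < A -> 0 < B -> B < Re z -> (1 <= N)%nat ->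
  R_fact lam A B N z /
  (A * exp (lam * B * (1 - ln (lam * B))) / Rpower (INR N) (lam * (Re z - B) - 1)
   * Cmod (Gamma (RtoC lam * z)%C) / (Re z - B))
  = / (Cmod (Gamma (RtoC lam * z + RtoC (INR N + 1))%C)
       / (INR (fact N) * Rpower (INR N) (Re (RtoC lam * z)%C)))
    * (Rpower (INR N + lam * B + 1) (INR N + lam * B + 1)
       / ((INR N + 1) ^ N * Rpower (INR N) (lam * B + 1)) / exp (lam * B)).
Proof.
  intros Hlam HA HB Hz HN. assert (HN' : 0 < INR N) by (apply lt_0_INR; lia).
  assert (Hs : 0 < Re (RtoC lam * z)%C) by (rewrite Re_RtoC_mult; nra).
  assert (Hg := proj1 (Cmod_gt_0 _) (Gamma_neq_0 _ Hs)).
  assert (HG : 0 < Cmod (Gamma (RtoC lam * z + RtoC (INR N + 1))%C)).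
  { apply Cmod_gt_0, Gamma_neq_0. rewrite re_plus. simpl Re at 2. lra. }
  unfold R_fact. rewrite Gamma_nat, Cmod_div, !Cmod_mult, !Cmod_R, Re_RtoC_mult.
  2: { apply Cmod_gt_0. rewrite Cmod_mult, Cmod_R, Rabs_pos_eq by lra. nra. }
  rewrite (Rabs_pos_eq (INR (fact N))), (Rabs_pos_eq (Re z - B)) by (try apply pos_INR; lra).
  rewrite <- (Rpower_pow N (INR N + 1)) by lra. unfold Rpower.
  replace (lam * B * (1 - ln (lam * B))) with (lam * B + - (lam * B * ln (lam * B))) by ring.
  replace ((lam * (Re z - B) - 1) * ln (INR N))
    with (lam * Re z * ln (INR N) + - ((lam * B + 1) * ln (INR N))) by ring.
  rewrite !exp_plus, !exp_Ropp.
  assert (0 < INR (fact N)) by apply INR_fact_lt_0.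
  generalize (exp_pos (lam * B)) (exp_pos (lam * B * ln (lam * B)))
    (exp_pos (lam * Re z * ln (INR N))) (exp_pos ((lam * B + 1) * ln (INR N)))
    (exp_pos ((INR N + lam * B + 1) * ln (INR N + lam * B + 1)))
    (exp_pos (INR N * ln (INR N + 1))). intros.
  field. repeat split; lra.
Qed.

Theorem lemma3p3 (lam A B : R) (z : C)
  (Hlam : 0 < lam) (HA : 0 < A) (HB : 0 < B) (Hz : B < Re z) :
  is_lim_seq
    (fun N : nat =>
       R_fact lam A B N z /
       (A * exp (lam * B * (1 - ln (lam * B)))
          / Rpower (INR N) (lam * (Re z - B) - 1)
          * Cmod (Gamma (Cmult (RtoC lam) z)) / (Re z - B)))
    1.
Proof.
  assert (Hs : 0 < Re (RtoC lam * z)%C) by (rewrite Re_RtoC_mult; nra).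
  assert (Hc : 0 < lam * B) by nra.
  eapply is_lim_seq_ext_loc.
  { exists 1%nat. intros N HN. symmetry. now apply R_fact_ratio_eq. }
  replace (Finite 1) with (Finite (/ 1 * (exp (lam * B) / exp (lam * B))))
    by (f_equal; field; apply Rgt_not_eq, exp_pos).
  apply is_lim_seq_mult'.
  - apply (is_lim_seq_inv _ 1); [now apply Cmod_Gamma_shift_asymptotic |].
    intros E; injection E; lra.
  - apply is_lim_seq_mult'; [now apply is_lim_seq_Rpower_ratio | apply is_lim_seq_const].
Qed.
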